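(* Suppose $\ell$ is a proper loss and fix $g\in\Delta_m$. Define $f^*:\mathcal{X}\to\Delta_m$ by $f^*_y(x)=\frac{\frac{g_y}{\pi_y}\eta_y(x)}{\sum_{j=1}^m\frac{g_j}{\pi_j}\eta_j(x)}$ at points where the denominator is positive, and $f^*(x)$ an arbitrary fixed element of $\Delta_m$ otherwise. Then $f^*$ minimizes $f\mapsto\sum_{i=1}^m g_i\,\ell_i(f)$ over all measurable $f:\mathcal{X}\to\Delta_m$.
   Context: $\mathcal{X}$ is a measurable space, $[m]=\{1,\dots,m\}$, $(X,Y)\sim\mathcal{D}$ on $\mathcal{X}\times[m]$, $\eta_y(x)=\mathbb{P}(Y=y\mid X=x)$, $\pi_y=\mathbb{P}(Y=y)>0$ for all $y$. $\Delta_m$ is the probability simplex in $\mathbb{R}^m$. A loss $\ell:[m]\times\Delta_m\to[0,\infty)$ is proper if for every $p\in\Delta_m$, $p\in\arg\min_{q\in\Delta_m}\sum_y p_y\ell(y,q)$. Per-class loss: $\ell_i(f)=\mathbb{E}[\ell(Y,f(X))\mid Y=i]$ for measurable $f:\mathcal{X}\to\Delta_m$. *)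

From HB Require Import structures.
From mathcomp Require Import all_boot all_order all_algebra.
From mathcomp Require Import all_classical all_reals all_analysis.
Set Implicit Arguments. Unset Strict Implicit. Unset Printing Implicit Defensive.
Import Order.TTheory GRing.Theory Num.Theory.
Local Open Scope ring_scope.

Section Defs.
Context {R : realType} {m : nat}.

Definition in_simplex (p : 'I_m -> R) : Prop :=
  (forall i, 0 <= p i) /\ \sum_(i < m) p i = 1.

Definition is_loss (l : 'I_m -> ('I_m -> R) -> R) : Prop :=
  forall y p, in_simplex p -> 0 <= l y p.

Definition proper_loss (l : 'I_m -> ('I_m -> R) -> R) : Prop :=
  forall p, in_simplex p -> forall q, in_simplex q ->
    \sum_(y < m) p y * l y p <= \sum_(y < m) p y * l y q.

Context {d : measure_display} {X : measurableType d}.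

Definition meas_predictor (f : X -> 'I_m -> R) : Prop :=
  (forall i, measurable_fun setT (fun x => f x i)) /\ (forall x, in_simplex (f x)).

Variables (mu : probability X R) (eta : X -> 'I_m -> R).

(* pi_y = P(Y = y) = E[eta_y(X)] *)
Definition prior (y : 'I_m) : \bar R := (\int[mu]_x (eta x y)%:E)%E.

(* per-class loss l_i(f) = E[l(Y,f(X)) | Y = i] = E[l(i,f(X)) eta_i(X)] / pi_i *)
Definition class_loss (l : 'I_m -> ('I_m -> R) -> R) (i : 'I_m)
    (f : X -> 'I_m -> R) : \bar R :=
  (((fine (prior i))^-1)%:E * \int[mu]_x (l i (f x) * eta x i)%:E)%E.

Definition weighted_risk (l : 'I_m -> ('I_m -> R) -> R) (g : 'I_m -> R)
    (f : X -> 'I_m -> R) : \bar R :=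
  (\sum_(i < m) (g i)%:E * class_loss l i f)%E.

Definition fstar (g c : 'I_m -> R) (x : X) : 'I_m -> R :=
  let Z := \sum_(j < m) g j / fine (prior j) * eta x j in
  if 0 < Z then (fun y => g y / fine (prior y) * eta x y / Z) else c.

End Defs.

From HB Require Import structures.
From mathcomp Require Import all_boot all_order all_algebra.
From mathcomp Require Import all_classical all_reals all_analysis.
From mathcomp Require Import measurable_realfun.
Set Implicit Arguments. Unset Strict Implicit. Unset Printing Implicit Defensive.
Import Order.TTheory GRing.Theory Num.Theory.
Local Open Scope ring_scope.
Local Open Scope classical_set_scope.

(* Writing pi_i^-1 E[l(i, f X) eta_i(X)] for l_i(f), the objective becomes
   E[sum_i w_i(X) l(i, f X)] with the nonnegative weights
   w_i(x) = g_i / pi_i * eta_i(x).  It therefore suffices to minimize the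
   integrand pointwise, and by properness sum_i w_i(x) l(i, q) is minimized over
   the simplex at q = w(x) / sum_j w_j(x), which is f^*(x).  Where all the
   weights vanish the integrand is 0 for every q. *)

Section normalization.
Variables (R : realType) (m : nat).

Definition normalize (c w : 'I_m -> R) : 'I_m -> R :=
  let Z := \sum_(j < m) w j in if 0 < Z then (fun y => w y / Z) else c.

Variables (c w : 'I_m -> R).
Hypotheses (c_simplex : in_simplex c) (w_ge0 : forall y, 0 <= w y).

Lemma normalize_simplex : in_simplex (normalize c w).
Proof.
rewrite /normalize; case: ifP => // Z_gt0; split.
  by move=> y; rewrite divr_ge0 // ltW.
by rewrite -mulr_suml divff // gt_eqF.
Qed.

Lemma normalize_weighted_loss_min (l : 'I_m -> ('I_m -> R) -> R) :
  proper_loss l -> forall q, in_simplex q ->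
  \sum_(y < m) w y * l y (normalize c w) <= \sum_(y < m) w y * l y q.
Proof.
move=> l_proper q q_simplex.
have [Z_gt0|Z_le0] := ltP 0 (\sum_(j < m) w j).
  have sum_normalize (a : 'I_m -> R) : \sum_(y < m) w y * a y =
      (\sum_(j < m) w j) * \sum_(y < m) normalize c w y * a y.
    rewrite mulr_sumr /normalize Z_gt0; apply: eq_bigr => y _.
    by rewrite [RHS]mulrA [_ * (_ / _)]mulrCA divff ?mulr1 // gt_eqF.
  rewrite !sum_normalize ler_pM2l //.
  exact: l_proper normalize_simplex _ q_simplex.
have w0 y : w y = 0.
  have /eqP : \sum_(j < m) w j = 0 by apply/eqP; rewrite eq_le Z_le0 sumr_ge0.
  by rewrite psumr_eq0 // => /allP/(_ y (mem_index_enum _))/eqP.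
by rewrite !big1 // => y _; rewrite w0 mul0r.
Qed.

End normalization.

Lemma measurable_inv (R : realType) : measurable_fun setT (@GRing.inv R).
Proof.
have -> : (@GRing.inv R) = fun t => if t == 0 then 0 else t^-1.
  by apply: funext => t; case: eqP => // ->; rewrite invr0.
apply: measurable_fun_if => //.
- apply: (@measurable_fun_eqr _ _ _ setT id (fun=> 0)).
    exact: measurable_id.
  exact: measurable_cst.
- have -> : [set: R] `&` (fun t => t == 0) @^-1` [set false] = [set t | t != 0].
    by apply/seteqP; split => t /=; [case => _; case: (t == 0)|move/negbTE].
  apply: open_continuous_measurable_fun; first exact: open_neq.
  by move=> x; rewrite inE /= => x_neq0; apply: inv_continuous.
Qed.

Lemma meas_predictor_normalize (R : realType) (d : measure_display)
    (X : measurableType d) (m : nat) (c : 'I_m -> R) (w : X -> 'I_m -> R) :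
  in_simplex c -> (forall x y, 0 <= w x y) ->
  (forall y, measurable_fun setT (fun x => w x y)) ->
  meas_predictor (fun x => normalize c (w x)).
Proof.
move=> c_simplex w_ge0 w_meas; split=> [i|x]; last exact: normalize_simplex.
have Z_meas : measurable_fun setT (fun x => \sum_(j < m) w x j).
  exact: measurable_sum.
rewrite /normalize; under eq_fun do rewrite (fun_if (fun h => h i)).
apply: measurable_fun_ifT.
- by apply: measurable_fun_ltr => //; exact: measurable_cst.
- by apply: measurable_funM => //; apply: measurableT_comp => //; exact: measurable_inv.
- exact: measurable_cst.
Qed.

Section weighted_risk.
Variables (R : realType) (d : measure_display) (X : measurableType d) (m : nat).
Variables (mu : probability X R) (eta : X -> 'I_m -> R).
Hypotheses (eta_meas : forall y, measurable_fun setT (fun x => eta x y))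
  (eta_ge0 : forall x y, 0 <= eta x y).
Variables (l : 'I_m -> ('I_m -> R) -> R) (g : 'I_m -> R).
Hypotheses (l_loss : is_loss l) (g_ge0 : forall i, 0 <= g i)
  (l_meas : forall f : X -> 'I_m -> R, meas_predictor f ->
     forall y, measurable_fun setT (fun x => l y (f x))).

Definition risk_weight (x : X) (i : 'I_m) : R :=
  g i / fine (prior mu eta i) * eta x i.

Lemma fine_prior_ge0 i : 0 <= fine (prior mu eta i).
Proof. by apply/fine_ge0/integral_ge0 => x _; rewrite lee_fin. Qed.

Lemma risk_weight_ge0 x i : 0 <= risk_weight x i.
Proof. by rewrite mulr_ge0 ?divr_ge0 ?fine_prior_ge0. Qed.

Lemma measurable_risk_weight i : measurable_fun setT (risk_weight ^~ i).
Proof. by apply: measurable_funM => //; exact: measurable_cst. Qed.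

Lemma fstarE c : fstar mu eta g c = fun x => normalize c (risk_weight x).
Proof. by []. Qed.

Section fixed_predictor.
Variables (f : X -> 'I_m -> R) (f_pred : meas_predictor f).

Let loss_ge0 i x : 0 <= l i (f x).
Proof. by apply: l_loss; case: f_pred. Qed.

Let measurable_loss i : measurable_fun setT (fun x => l i (f x)).
Proof. exact: l_meas. Qed.

Lemma weighted_risk_integral : weighted_risk mu eta l g f =
  (\int[mu]_x (\sum_(i < m) risk_weight x i * l i (f x))%:E)%E.
Proof.
under eq_integral do rewrite -sumEFin.
rewrite /weighted_risk ge0_integral_sum //; last first.
- by move=> i x _; rewrite lee_fin mulr_ge0 ?risk_weight_ge0.
- move=> i; apply/measurable_EFinP/measurable_funM => //.
  exact: measurable_risk_weight.
apply: eq_bigr => i _.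
rewrite /class_loss muleA -EFinM -ge0_integralZl //; last first.
- by rewrite lee_fin mulr_ge0 ?invr_ge0 ?fine_prior_ge0.
- by move=> x _; rewrite lee_fin mulr_ge0.
- exact/measurable_EFinP/measurable_funM.
apply: eq_integral => x _; rewrite -EFinM /risk_weight; congr EFin.
by rewrite [l i _ * _]mulrC mulrA.
Qed.

Lemma measurable_risk_integrand :
  measurable_fun setT
    (fun x => (\sum_(i < m) risk_weight x i * l i (f x))%:E).
Proof.
apply/measurable_EFinP/measurable_sum => i.
by apply: measurable_funM => //; exact: measurable_risk_weight.
Qed.

Lemma risk_integrand_ge0 x :
  (0 <= (\sum_(i < m) risk_weight x i * l i (f x))%:E)%E.
Proof. by rewrite lee_fin sumr_ge0 // => i _; rewrite mulr_ge0 ?risk_weight_ge0. Qed.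

End fixed_predictor.
End weighted_risk.

Theorem lemma1 (R : realType) (d : measure_display) (X : measurableType d)
  (m : nat) (mu : probability X R) (eta : X -> 'I_m -> R)
  (eta_meas : forall y, measurable_fun setT (fun x => eta x y))
  (eta_ge0 : forall x y, 0 <= eta x y)
  (eta_sum1 : forall x, \sum_(y < m) eta x y = 1)
  (pi_gt0 : forall y, (0 < prior mu eta y)%E)
  (l : 'I_m -> ('I_m -> R) -> R)
  (l_loss : is_loss l)
  (l_meas : forall (f : X -> 'I_m -> R), meas_predictor f ->
              forall y, measurable_fun setT (fun x => l y (f x)))
  (l_proper : proper_loss l)
  (g : 'I_m -> R) (g_simplex : in_simplex g)
  (c : 'I_m -> R) (c_simplex : in_simplex c) :
  meas_predictor (fstar mu eta g c) /\
  forall f : X -> 'I_m -> R, meas_predictor f ->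
    (weighted_risk mu eta l g (fstar mu eta g c) <= weighted_risk mu eta l g f)%E.
Proof.
have [g_ge0 _] := g_simplex.
have w_ge0 := risk_weight_ge0 mu eta_ge0 g_ge0.
have fstar_pred : meas_predictor (fstar mu eta g c).
  rewrite fstarE; apply: meas_predictor_normalize => //.
  exact: measurable_risk_weight.
split=> // f f_pred.
rewrite !weighted_risk_integral //.
apply: ge0_le_integral => //.
- by move=> x _; exact: risk_integrand_ge0.
- exact: measurable_risk_integrand.
- exact: measurable_risk_integrand.
move=> x _; rewrite lee_fin fstarE.
exact: normalize_weighted_loss_min c_simplex (w_ge0 x) l l_proper _ (proj2 f_pred x).
Qed.
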